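(* Let $\Gamma=\langle x,y\mid xy^{-1}=yx^{-1}\rangle$ with generating set $\Delta=\{x,y\}$. The operator $W=W_xU_x+W_yU_y$ on $\ell^2(\Gamma)$ is a homogeneous scalar quantum walk on $C_\Delta(\Gamma)$ if and only if, up to a global phase, $W_x=\cos\phi$ and $W_y=i\sin\phi$ for some real $\phi$ (with both values nonzero). In particular, a homogeneous scalar quantum walk on $C_\Delta(\Gamma)$ exists.
   Context: The Cayley graph $C_\Delta(\Gamma)$ has vertex set $\Gamma$ and directed edges $(g,g\delta)$, $g\in\Gamma,\delta\in\Delta$. Let $\ell^2(\Gamma)$ have orthonormal basis $\{|g\rangle\}_{g\in\Gamma}$ and for $\delta\in\Gamma$ let $U_\delta|g\rangle=|g\delta\rangle$. A homogeneous scalar quantum walk on $C_\Delta(\Gamma)$ is a unitary operator $W=\sum_{\delta\in\Delta}W_\delta U_\delta$ with all complex coefficients $W_\delta$ nonzero. ''Up to a global phase'' means that all coefficients may be multiplied by a common complex number of modulus one. *)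

From HB Require Import structures.
From mathcomp Require Import all_boot all_order all_algebra.
From mathcomp Require Import all_classical all_reals.
From mathcomp Require Import ereal esum trigo.
From mathcomp Require Import complex.
Set Implicit Arguments. Unset Strict Implicit. Unset Printing Implicit Defensive.
Import Order.TTheory GRing.Theory Num.Theory.
Local Open Scope ring_scope.

Record grp := Grp {
  gcar :> choiceType;  (* harmless: every type is a choiceType classically (boolp) *)
  gmul : gcar -> gcar -> gcar;
  ginv : gcar -> gcar;
  gone : gcar;
  gmulA : forall a b c, gmul a (gmul b c) = gmul (gmul a b) c;
  gmul1 : forall a, gmul gone a = a;
  gmulV : forall a, gmul (ginv a) a = gone
}.

Definition is_hom (G H : grp) (phi : G -> H) : Prop :=
  forall a b : G, phi (gmul a b) = gmul (phi a) (phi b).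

Definition rel_xy (H : grp) (a b : H) : Prop :=
  gmul a (ginv b) = gmul b (ginv a).

(* (G, x, y) is the group presented by < x, y | x y^{-1} = y x^{-1} >:
   the relation holds in G, and G has the universal property of the presentation. *)
Definition presents_Gamma (G : grp) (x y : G) : Prop :=
  rel_xy x y /\
  forall (H : grp) (a b : H), rel_xy a b ->
    (exists phi : G -> H, is_hom phi /\ phi x = a /\ phi y = b) /\
    (forall phi psi : G -> H, is_hom phi -> is_hom psi ->
       phi x = a -> phi y = b -> psi x = a -> psi y = b ->
       forall g, phi g = psi g).

Section L2.
Variables (R : realType) (G : grp).
Local Notation C := R[i].

Definition sqmod (z : C) : R := (complex.Re z) ^+ 2 + (complex.Im z) ^+ 2.

Definition l2sqnorm (f : G -> C) : \bar R :=
  (\esum_(g in [set: G]) (sqmod (f g))%:E)%R.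

Definition in_l2 (f : G -> C) : Prop := (l2sqnorm f < +oo)%E.

(* A unitary operator on l^2(G): a norm-preserving map of l^2(G) onto l^2(G)
   (the operators considered below are linear). *)
Definition unitary_l2 (A : (G -> C) -> (G -> C)) : Prop :=
  (forall f, in_l2 f -> l2sqnorm (A f) = l2sqnorm f) /\
  (forall h, in_l2 h -> exists f, in_l2 f /\ A f = h).

(* U_d |g> = |g d>, i.e. (U_d f)(h) = f(h d^{-1}). *)
Definition Ushift (d : G) (f : G -> C) : G -> C := fun h => f (gmul h (ginv d)).

(* W = sum_{(d, W_d) in Delta} W_d U_d  (Delta: list of generator/coefficient
   pairs, generators assumed pairwise distinct) *)
Definition walk_op (Delta : seq (G * C)) (f : G -> C) : G -> C :=
  fun h => \sum_(p <- Delta) p.2 * Ushift p.1 f h.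

Definition is_HSQW (Delta : seq (G * C)) : Prop :=
  all (fun p => p.2 != 0) Delta /\ unitary_l2 (walk_op Delta).
End L2.

From HB Require Import structures.
From mathcomp Require Import all_boot all_order all_algebra.
From mathcomp Require Import all_classical all_reals.
From mathcomp Require Import ereal esum trigo.
From mathcomp Require Import complex.
From mathcomp Require Import ring lra.
Import Order.TTheory GRing.Theory Num.Theory.
Local Open Scope ring_scope.
Local Open Scope complex_scope.

(** Put t = x y^-1.  The relation says t = y x^-1 as well, so t is an
   involution with t x = y and t y = x.  After the substitution h = k x, the
   walk acts on each pair of values (f k, f (k t)) by the matrix
   [[a, b], [b, a]]; this matrix is unitary iff |a|^2 + |b|^2 = 1 and
   Re (a b^* ) = 0, which is exactly the polar form a = c cos phi,
   b = c i sin phi.  Conversely, testing W on delta_1 and delta_1 + delta_t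
   (these are distinct points because Gamma maps onto Z/2, so x <> y) forces
   both conditions. *)

Section GroupFacts.
Context {G : grp}.
Implicit Types g d u : G.

Lemma gmulgV g : gmul g (ginv g) = gone G.
Proof.
transitivity (gmul (gmul (ginv (ginv g)) (ginv g)) (gmul g (ginv g))).
  by rewrite gmulV gmul1.
by rewrite -gmulA (gmulA (ginv g) g) gmulV gmul1 gmulV.
Qed.

Lemma gmulg1 g : gmul g (gone G) = g.
Proof. by rewrite -(gmulV g) gmulA gmulgV gmul1. Qed.

Lemma gmulgK d g : gmul (gmul g d) (ginv d) = g.
Proof. by rewrite -gmulA gmulgV gmulg1. Qed.

Lemma gmulgKV d g : gmul (gmul g (ginv d)) d = g.
Proof. by rewrite -gmulA gmulV gmulg1. Qed.

Lemma gmulgI g : injective (gmul g).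
Proof. by move=> u d e; rewrite -(gmul1 u) -(gmulV g) -gmulA e gmulA gmulV gmul1. Qed.

Lemma eq_gmulgV g d u : (gmul g (ginv d) == u) = (g == gmul u d).
Proof. by apply/eqP/eqP => [<- | ->]; rewrite (gmulgKV, gmulgK). Qed.

Lemma gmulr_bij d : bijective (fun g => gmul g d).
Proof. by exists (fun g => gmul g (ginv d)) => g; rewrite (gmulgK, gmulgKV). Qed.

End GroupFacts.

Section Relation.
Context {G : grp} {x y : G}.
Hypothesis rxy : rel_xy x y.
Local Notation t := (gmul x (ginv y)).

Lemma rel_xy_tx : gmul t x = y.
Proof. by rewrite rxy gmulgKV. Qed.

Lemma rel_xy_involutive : involutive (fun g => gmul g t).
Proof. by move=> g; rewrite -gmulA {2}rxy (gmulA t) gmulgKV gmulgV gmulg1. Qed.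

Lemma rel_xy_Vl : gmul (ginv x) y = gmul (ginv y) x.
Proof. by apply: (@gmulgI _ y); rewrite !gmulA gmulgV gmul1 -rxy gmulgKV. Qed.

End Relation.

Definition bool_grp : grp.
Proof.
refine (@Grp bool addb id false _ _ _) => [a b c | a | a].
- by rewrite addbA.
- exact: addFb.
- exact: addbb.
Defined.

Lemma presents_Gamma_neq {G : grp} {x y : G} : presents_Gamma x y -> x != y.
Proof.
move=> [_ univ]; have [[phi [_ [phix phiy]]] _] := univ bool_grp true false erefl.
by apply/eqP => exy; move: phix; rewrite exy phiy.
Qed.

Definition dotc {R : realType} (a b : R[i]) : R :=
  complex.Re a * complex.Re b + complex.Im a * complex.Im b.

Section ComplexFacts.
Context {R : realType}.
Implicit Types a b u v w : R[i].

Lemma sqmod_ge0 a : 0 <= sqmod a.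
Proof. by rewrite addr_ge0 // sqr_ge0. Qed.

Lemma sqmod_eq0 a : (sqmod a == 0) = (a == 0).
Proof.
case: a => a1 a2; rewrite /sqmod paddr_eq0 ?sqr_ge0 // !sqrf_eq0.
by rewrite eq_complex.
Qed.

Lemma sqmod_gt0 a : (0 < sqmod a) = (a != 0).
Proof. by rewrite lt_def sqmod_eq0 sqmod_ge0 andbT. Qed.

Lemma sqmod0 : sqmod (0 : R[i]) = 0.
Proof. by rewrite /sqmod /= expr0n addr0. Qed.

Lemma sqmod1 : sqmod (1 : R[i]) = 1.
Proof. by rewrite /sqmod /= expr1n expr0n addr0. Qed.

Lemma sqmodM a b : sqmod (a * b) = sqmod a * sqmod b.
Proof. by case: a b => a1 a2 [b1 b2]; rewrite /sqmod /=; ring. Qed.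

Lemma sqmodD a b : sqmod (a + b) = sqmod a + sqmod b + 2 * dotc a b.
Proof. by case: a b => a1 a2 [b1 b2]; rewrite /sqmod /dotc /=; ring. Qed.

Lemma sqmod_conj a : sqmod a^* = sqmod a.
Proof. by case: a => a1 a2; rewrite /sqmod /=; ring. Qed.

Lemma dotc_conj a b : dotc a^* b^* = dotc a b.
Proof. by case: a b => a1 a2 [b1 b2]; rewrite /dotc /=; ring. Qed.

Lemma sqmod_mix a b u v :
  sqmod (a * u + b * v) + sqmod (a * v + b * u) =
  (sqmod a + sqmod b) * (sqmod u + sqmod v) + 4 * dotc a b * dotc u v.
Proof.
by case: a b u v => a1 a2 [b1 b2] [u1 u2] [v1 v2]; rewrite /sqmod /dotc /=; ring.
Qed.

Lemma mix_conj a b u w :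
  a * (a^* * u + b^* * w) + b * (a^* * w + b^* * u) =
  (sqmod a + sqmod b)%:C * u + (2 * dotc a b)%:C * w.
Proof.
case: a b u w => a1 a2 [b1 b2] [u1 u2] [w1 w2]; rewrite /sqmod /dotc.
by apply/eqP; rewrite eq_complex /=; apply/andP; split; apply/eqP; ring.
Qed.

End ComplexFacts.

Lemma cos_sin_onto {R : realType} (r s : R) :
  r ^+ 2 + s ^+ 2 = 1 -> exists phi, cos phi = r /\ sin phi = s.
Proof.
move=> rs1.
have r_itv : -1 <= r <= 1 by apply/andP; split; nra.
have sin_acos_r : sin (acos r) = `|s|.
  by rewrite sin_acos // -rs1 addrAC subrr add0r sqrtr_sqr.
exists (if 0 <= s then acos r else - acos r).
case: ifPn => s0; rewrite ?cosN ?sinN acosK ?inE // sin_acos_r.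
  by rewrite ger0_norm.
by rewrite ltr0_norm ?opprK // ltNge.
Qed.

Lemma polar_of_unit_orth {R : realType} (a b : R[i]) :
  a != 0 -> b != 0 -> sqmod a + sqmod b = 1 -> dotc a b = 0 ->
  exists (c : R[i]) (phi : R), sqmod c = 1 /\ cos phi != 0 /\ sin phi != 0 /\
    a = c * (cos phi)%:C /\ b = c * ('i * (sin phi)%:C).
Proof.
rewrite -!sqmod_gt0; case: a b => a1 a2 [b1 b2] a_pos b_pos ab1 ab0.
move: a_pos b_pos ab1 ab0; rewrite /sqmod /dotc /=.
set va := a1 ^+ 2 + a2 ^+ 2; set vb := b1 ^+ 2 + b2 ^+ 2 => a_pos b_pos ab1 ab0.
set cross := a1 * b2 - a2 * b1.
set r := Num.sqrt va; set s := cross / r.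
have r_pos : 0 < r by rewrite sqrtr_gt0.
have r_neq0 : r != 0 by rewrite gt_eqF.
have r2 : r ^+ 2 = va by rewrite sqr_sqrtr // ltW.
have lagrange : cross ^+ 2 + (a1 * b1 + a2 * b2) ^+ 2 = va * vb.
  by rewrite /cross /va /vb; ring.
have cross2 : cross ^+ 2 = va * vb by rewrite -lagrange ab0 expr0n /= addr0.
have s2 : s ^+ 2 = vb by rewrite expr_div_n cross2 r2 mulrC mulKf // gt_eqF.
have [phi [cos_phi sin_phi]] : exists phi, cos phi = r /\ sin phi = s.
  by apply: cos_sin_onto; rewrite r2 s2.
(* orthogonality to a makes b a real multiple of 'i * a *)
have eb1 : b1 * va = - a2 * cross.
  by rewrite -[LHS]subr0 -(mulr0 a1) -ab0 /va /cross; ring.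
have eb2 : b2 * va = a1 * cross.
  by rewrite -[LHS]subr0 -(mulr0 a2) -ab0 /va /cross; ring.
have va_neq0 : va != 0 by rewrite gt_eqF.
exists ((a1 / r) +i* (a2 / r)), phi; rewrite cos_phi sin_phi.
split; [|split; [|split; [|split]]] => //.
- by rewrite /sqmod /= !expr_div_n -mulrDl r2 divff.
- by rewrite -sqrf_eq0 s2 gt_eqF.
- by apply/eqP; rewrite eq_complex /= !mulr0 subr0 add0r !divfK ?eqxx.
apply/eqP; rewrite eq_complex /=; apply/andP; split; apply/eqP.
  by rewrite -[b1](mulfK va_neq0) eb1 -r2 /s; field.
by rewrite -[b2](mulfK va_neq0) eb2 -r2 /s; field.
Qed.

Lemma unit_orth_polarP {R : realType} (a b : R[i]) :
  [/\ a != 0, b != 0, sqmod a + sqmod b = 1 & dotc a b = 0] <->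
  exists (c : R[i]) (phi : R), sqmod c = 1 /\ cos phi != 0 /\ sin phi != 0 /\
    a = c * (cos phi)%:C /\ b = c * ('i * (sin phi)%:C).
Proof.
split=> [[a0 b0 ab1 ab0] | [c [phi [c1 [cos0 [sin0 [-> ->]]]]]]].
  exact: polar_of_unit_orth.
have sqmod_i : sqmod ('i : R[i]) = 1 by rewrite /sqmod /= expr0n expr1n add0r.
have sqmod_real (r : R) : sqmod r%:C = r ^+ 2 by rewrite /sqmod /= expr0n addr0.
rewrite -!sqmod_eq0 !sqmodM c1 sqmod_i !sqmod_real !mul1r !sqrf_eq0 cos0 sin0.
split=> //; last by case: c {c1} => c1 c2; rewrite /dotc /=; ring.
exact: cos2Dsin2.
Qed.

Section EsumFacts.
Context {R : realType} {T : choiceType}.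
Implicit Types (F H : T -> \bar R) (p : T -> T).

Lemma esum_bij F {e : T -> T} : bijective e ->
  \esum_(k in [set: T]) F k = \esum_(k in [set: T]) F (e k).
Proof. by move=> bij_e; apply: reindex_esum; rewrite setTT_bijective. Qed.

Lemma adde_self_inj (u v : \bar R) :
  (0 <= u)%E -> (0 <= v)%E -> (u + u = v + v)%E -> u = v.
Proof. by case: u v => [r| |] [s| |] //= r0 s0 [] e; congr (_%:E); lra. Qed.

Lemma esum_pair p F H : involutive p ->
  (forall k, 0 <= F k)%E -> (forall k, 0 <= H k)%E ->
  (forall k, F k + F (p k) = H k + H (p k))%E ->
  \esum_(k in [set: T]) F k = \esum_(k in [set: T]) H k.
Proof.
move=> inv_p F0 H0 FH; apply: adde_self_inj; rewrite ?esum_ge0 //.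
rewrite {2}(esum_bij F (inv_bij inv_p)) {2}(esum_bij H (inv_bij inv_p)).
by rewrite -!esumD //; apply: eq_esum => k _.
Qed.

Lemma esum_delta (u : T) (c : \bar R) : (0 <= c)%E ->
  \esum_(k in [set: T]) (if k == u then c else 0%E) = c.
Proof.
move=> c0; rewrite -[RHS](@esum_set1 R T u (fun=> c)) // [RHS]esum_mkcond.
by apply: eq_esum => k _; rewrite in_set1.
Qed.

Lemma esum_sqmod_mix {p} {a b : R[i]} (f : T -> R[i]) : involutive p ->
  sqmod a + sqmod b = 1 -> dotc a b = 0 ->
  \esum_(k in [set: T]) (sqmod (a * f k + b * f (p k)))%:E =
  \esum_(k in [set: T]) (sqmod (f k))%:E.
Proof.
move=> inv_p ab1 ab0.
apply: (esum_pair _ _ _ inv_p) => [k|k|k]; rewrite ?lee_fin ?sqmod_ge0 //.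
by rewrite inv_p -!EFinD sqmod_mix ab1 ab0 mul1r mulr0 mul0r addr0.
Qed.

End EsumFacts.

Section Delta.
Context {R : realType} {G : grp}.

Definition delta (u g : G) : R[i] := (g == u)%:R.

Lemma delta_shift u d g : delta u (gmul g (ginv d)) = delta (gmul u d) g.
Proof. by rewrite /delta eq_gmulgV. Qed.

Lemma l2sqnorm_delta2 u v (c d : R[i]) : u != v ->
  l2sqnorm (fun g => c * delta u g + d * delta v g) = (sqmod c + sqmod d)%:E.
Proof.
move=> uv; rewrite /l2sqnorm EFinD.
rewrite -(esum_delta u _ (lee_tofin (sqmod_ge0 c))).
rewrite -(esum_delta v _ (lee_tofin (sqmod_ge0 d))).
rewrite -esumD => [|k _|k _]; last 2 first.
- by case: ifP; rewrite ?lee_fin ?sqmod_ge0.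
- by case: ifP; rewrite ?lee_fin ?sqmod_ge0.
apply: eq_esum => g _; rewrite /delta.
have [->|gu] := eqVneq g u; first by rewrite (negbTE uv) !mulr1 mulr0 addr0 adde0.
have [_|gv] := eqVneq g v; first by rewrite mulr1 mulr0 add0r add0e.
by rewrite !mulr0 addr0 sqmod0 adde0.
Qed.

End Delta.

Section Walk.
Context {R : realType} {G : grp} {x y : G}.
Hypothesis rxy : rel_xy x y.
Local Notation t := (gmul x (ginv y)).
Local Notation walk2 a b := (walk_op [:: (x, a); (y, b)]).
Implicit Types a b : R[i].

Lemma walk2E a b f h :
  walk2 a b f h = a * f (gmul h (ginv x)) + b * f (gmul h (ginv y)).
Proof. by rewrite /walk_op !big_cons big_nil addr0. Qed.

Section Unitary.
Variables a b : R[i].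
Hypotheses (ab1 : sqmod a + sqmod b = 1) (ab0 : dotc a b = 0).

Lemma walk2_isometry f : l2sqnorm (walk2 a b f) = l2sqnorm f.
Proof.
rewrite /l2sqnorm (esum_bij _ (gmulr_bij x)).
under eq_esum do rewrite walk2E gmulgK -gmulA.
exact: esum_sqmod_mix _ (rel_xy_involutive rxy) ab1 ab0.
Qed.

(* [f] is W^* h, with h (k y) written as h (k t x) to expose the pairing k <-> k t. *)
Lemma walk2_onto h : in_l2 h -> exists f, in_l2 f /\ walk2 a b f = h.
Proof.
move=> h_l2; pose f k := a^* * h (gmul k x) + b^* * h (gmul (gmul k t) x).
have norm_f : l2sqnorm f = l2sqnorm h.
  rewrite /l2sqnorm [RHS](esum_bij _ (gmulr_bij x)).
  apply: (esum_sqmod_mix (fun k => h (gmul k x)) (rel_xy_involutive rxy)).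
    by rewrite !sqmod_conj.
  by rewrite dotc_conj.
exists f; split; first by rewrite /in_l2 norm_f.
apply: funext => g; rewrite walk2E /f !gmulgKV.
have -> : gmul (gmul (gmul g (ginv x)) t) x = gmul (gmul g (ginv y)) x.
  by rewrite -(gmulA _ t x) (rel_xy_tx rxy) -gmulA (rel_xy_Vl rxy) gmulA.
have -> : gmul (gmul (gmul g (ginv y)) t) x = g.
  by rewrite -gmulA (rel_xy_tx rxy) gmulgKV.
by rewrite mix_conj ab1 ab0 mulr0 mul0r addr0 mul1r.
Qed.

Lemma walk2_unitary : unitary_l2 (walk2 a b).
Proof. by split=> [f _|]; [exact: walk2_isometry | exact: walk2_onto]. Qed.

End Unitary.

Hypothesis xy : x != y.

Lemma walk2_delta2 a b s :
  walk2 a b (fun g => 1 * delta (gone G) g + s * delta t g) =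
  (fun g => (a + s * b) * delta x g + (b + s * a) * delta y g).
Proof.
apply: funext => g.
by rewrite walk2E !delta_shift !gmul1 (rel_xy_tx rxy) gmulgKV; ring.
Qed.

Lemma walk2_isometry_coef {a b} :
  (forall f, in_l2 f -> l2sqnorm (walk2 a b f) = l2sqnorm f) ->
  sqmod a + sqmod b = 1 /\ dotc a b = 0.
Proof.
move=> iso; have one_t : gone G != t by rewrite eq_sym eq_gmulgV gmul1.
have test s : sqmod (a + s * b) + sqmod (b + s * a) = 1 + sqmod s.
  have test_l2 : in_l2 (fun g => 1 * delta (gone G) g + s * delta t g).
    by rewrite /in_l2 l2sqnorm_delta2 ?ltry.
  by move: (iso _ test_l2); rewrite walk2_delta2 !l2sqnorm_delta2 // sqmod1 => -[].
have ab1 : sqmod a + sqmod b = 1 by move: (test 0); rewrite !mul0r sqmod0 !addr0.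
split=> //; move: (test 1); rewrite !mul1r sqmod1 [b + a]addrC sqmodD ab1.
lra.
Qed.

Lemma HSQW_walk2 a b : is_HSQW [:: (x, a); (y, b)] <->
  [/\ a != 0, b != 0, sqmod a + sqmod b = 1 & dotc a b = 0].
Proof.
split=> [[/= /and3P[a0 b0 _] [iso _]] | [a0 b0 ab1 ab0]].
  by have [] := walk2_isometry_coef iso.
by split; [rewrite /= a0 b0 | exact: walk2_unitary].
Qed.

End Walk.

Theorem mainTheorem2 (R : realType) (G : grp) (x y : G) :
  presents_Gamma x y ->
  (forall Wx Wy : R[i],
     is_HSQW [:: (x, Wx); (y, Wy)] <->
     exists (c : R[i]) (phi : R),
       sqmod c = 1 /\ cos phi != 0 /\ sin phi != 0 /\
       Wx = c * (cos phi)%:C /\ Wy = c * ('i * (sin phi)%:C)) /\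
  (exists Wx Wy : R[i], is_HSQW [:: (x, Wx); (y, Wy)]).
Proof.
move=> pres; have rxy := pres.1; have xy := presents_Gamma_neq pres.
split=> [Wx Wy | ].
  exact: iff_trans (HSQW_walk2 rxy xy Wx Wy) (unit_orth_polarP Wx Wy).
exists ((3 / 5) +i* 0), (0 +i* (4 / 5)); apply/(HSQW_walk2 rxy xy).
by rewrite -!sqmod_gt0 /sqmod /dotc /=; split; lra.
Qed.
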